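(* Let $f:A\to B$ be a geometrically closed homomorphism between $\mathscr L$-structures such that the trivial structure $\mathbf 1$ does not embed into $B$. Then $f$ is an immersion. In particular, if $T$ is a strict theory, every geometrically closed homomorphism between models of $T_u$ is an immersion.
   Context: The trivial structure $\mathbf 1$ is the one-element $\mathscr L$-structure in which every relation symbol is interpreted as the full relation. A homomorphism preserves atomic sentences with parameters. A homomorphism $f:A\to B$ is geometrically closed if every sentence $\forall\bar y\,(\bigwedge\Phi(\bar a,\bar y)\to\psi(\bar a,\bar y))$ ($\Phi\cup\{\psi\}$ finite sets of atomic formulas, parameters $\bar a$ from $A$) true in $A$ is true in $B$ of $f\bar a$. $f$ is an immersion if for every positive existential (prenex existential, negation-free) sentence $\phi(\bar a)$ with parameters from $A$, $B\models\phi(f\bar a)$ implies $A\models\phi(\bar a)$. $T_u$ is the set of consequences of $T$ of the form $\forall\bar y\,\neg\bigwedge\Phi$, $\Phi$ a finite set of atomic formulas. $T$ is strict if $\mathbf 1$ embeds in no model of $T$ (equivalently $\mathbf 1\not\models T_u$). *)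

From mathcomp Require Import all_boot.
From Stdlib Require List.
Set Implicit Arguments.
Unset Strict Implicit.
Unset Printing Implicit Defensive.

Record signature := Signature {
  func : Type; farity : func -> nat;
  rel : Type; rarity : rel -> nat }.

Inductive term (L : signature) (V : Type) : Type :=
  | tvar : V -> term L V
  | tapp : forall f : func L, ('I_(farity f) -> term L V) -> term L V.

Inductive atomic (L : signature) (V : Type) : Type :=
  | aeq : term L V -> term L V -> atomic L V
  | arel : forall R : rel L, ('I_(rarity R) -> term L V) -> atomic L V.

Inductive pqf (L : signature) (V : Type) : Type :=
  | PAtom : atomic L V -> pqf L V
  | PTrue : pqf L V
  | PFalse : pqf L V
  | PAnd : pqf L V -> pqf L V -> pqf L V
  | POr : pqf L V -> pqf L V -> pqf L V.

Inductive formula (L : signature) : Type :=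
  | FAtom : atomic L nat -> formula L
  | FTrue : formula L
  | FFalse : formula L
  | FNot : formula L -> formula L
  | FAnd : formula L -> formula L -> formula L
  | FOr : formula L -> formula L -> formula L
  | FImp : formula L -> formula L -> formula L
  | FAll : nat -> formula L -> formula L
  | FEx : nat -> formula L -> formula L.

Record structure (L : signature) := Structure {
  carrier :> Type;
  nonempty : inhabited carrier;
  funI : forall f : func L, ('I_(farity f) -> carrier) -> carrier;
  relI : forall R : rel L, ('I_(rarity R) -> carrier) -> Prop }.

Fixpoint teval (L : signature) (M : structure L) (V : Type) (v : V -> M)
  (t : term L V) : M :=
  match t with
  | tvar x => v x
  | tapp f args => @funI _ M f (fun i => teval v (args i))
  end.

Definition aholds (L : signature) (M : structure L) (V : Type) (v : V -> M)
  (a : atomic L V) : Prop :=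
  match a with
  | aeq t s => teval v t = teval v s
  | arel R args => @relI _ M R (fun i => teval v (args i))
  end.

Fixpoint pholds (L : signature) (M : structure L) (V : Type) (v : V -> M)
  (p : pqf L V) : Prop :=
  match p with
  | PAtom a => aholds v a
  | PTrue => True
  | PFalse => False
  | PAnd p q => pholds v p /\ pholds v q
  | POr p q => pholds v p \/ pholds v q
  end.

Definition upd (T : Type) (v : nat -> T) (n : nat) (a : T) : nat -> T :=
  fun m => if m == n then a else v m.

Fixpoint fholds (L : signature) (M : structure L) (v : nat -> M)
  (phi : formula L) : Prop :=
  match phi with
  | FAtom a => aholds v a
  | FTrue => True
  | FFalse => False
  | FNot p => ~ fholds v p
  | FAnd p q => fholds v p /\ fholds v q
  | FOr p q => fholds v p \/ fholds v q
  | FImp p q => fholds v p -> fholds v q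
  | FAll n p => forall a : M, fholds (upd v n a) p
  | FEx n p => exists a : M, fholds (upd v n a) p
  end.

(** Formulas with parameters: variables [inl i] are parameters (assigned by
    p), variables [inr j] are the quantified variables (assigned by y). *)
Definition join (T : Type) (p y : nat -> T) : (nat + nat)%type -> T :=
  fun x => match x with inl i => p i | inr j => y j end.

Definition homomorphism (L : signature) (A B : structure L) (f : A -> B) :=
  forall (a : atomic L nat) (p : nat -> A), aholds p a -> aholds (f \o p) a.

Definition embedding (L : signature) (A B : structure L) (f : A -> B) :=
  forall (a : atomic L nat) (p : nat -> A), aholds p a <-> aholds (f \o p) a.

Definition embeds (L : signature) (A B : structure L) :=
  exists f : A -> B, embedding f.

Definition trivial_structure (L : signature) : structure L :=
  @Structure L unit (inhabits tt) (fun _ _ => tt) (fun _ _ => True).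

Definition geom_holds (L : signature) (M : structure L) (p : nat -> M)
  (Phi : list (atomic L (nat + nat)%type)) (psi : atomic L (nat + nat)%type) :=
  forall y : nat -> M, List.Forall (aholds (join p y)) Phi ->
    aholds (join p y) psi.

Definition geom_closed (L : signature) (A B : structure L) (f : A -> B) :=
  forall (Phi : list (atomic L (nat + nat)%type)) (psi : atomic L (nat + nat)%type)
         (p : nat -> A),
    geom_holds p Phi psi -> geom_holds (f \o p) Phi psi.

Definition immersion (L : signature) (A B : structure L) (f : A -> B) :=
  forall (theta : pqf L (nat + nat)%type) (p : nat -> A),
    (exists y : nat -> B, pholds (join (f \o p) y) theta) ->
    exists y : nat -> A, pholds (join p y) theta.

Definition theory (L : signature) := formula L -> Prop.

Definition models (L : signature) (T : theory L) (M : structure L) :=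
  forall phi, T phi -> forall v : nat -> M, fholds v phi.

Definition neg_univ_holds (L : signature) (M : structure L)
  (Phi : list (atomic L nat)) :=
  forall y : nat -> M, ~ List.Forall (aholds y) Phi.

Definition Tu (L : signature) (T : theory L) (Phi : list (atomic L nat)) :=
  forall M : structure L, models T M -> neg_univ_holds M Phi.

Definition models_Tu (L : signature) (T : theory L) (M : structure L) :=
  forall Phi, Tu T Phi -> neg_univ_holds M Phi.

Definition strict (L : signature) (T : theory L) :=
  forall M : structure L, models T M -> ~ embeds (trivial_structure L) M.

(** If [B] satisfies a positive existential formula over [f p] that fails in
    [A] over [p], some finite conjunction [Phi] of atoms is consistent over
    [f p] in [B] but inconsistent over [p] in [A].  Then [A] satisfies every
    sentence [forall y, /\ Phi -> psi], and since [f] is geometrically closed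
    so does [B]; as [psi] is arbitrary, every atomic formula holds at every
    constant assignment in [B], i.e. [1] embeds into [B].

    For the second part, if [1] embeds into a model [B] of [T_u], then every
    finite part of the atomic diagram of [1] is realised by a constant
    assignment in some model of [T]; by Łoś's theorem an ultraproduct of these
    models is a model of [T] into which [1] embeds, contradicting strictness. *)

From mathcomp Require Import all_boot.
From mathcomp Require Import boolp filter.
Set Implicit Arguments.
Unset Strict Implicit.
Unset Printing Implicit Defensive.

Section Renaming.
Variables (L : signature) (V W : Type) (s : V -> W).

Fixpoint trename (t : term L V) : term L W :=
  match t with
  | tvar x => tvar L (s x)
  | tapp f args => tapp (fun i => trename (args i))
  end.

Definition arename (a : atomic L V) : atomic L W :=
  match a with
  | aeq t u => aeq (trename t) (trename u)
  | arel R args => arel (fun i => trename (args i))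
  end.

Variables (M : structure L) (v : W -> M).

Lemma teval_rename t : teval v (trename t) = teval (v \o s) t.
Proof. by elim: t => [x|f args IH] //=; congr funI; apply: funext => i; exact: IH. Qed.

Lemma aholds_rename a : aholds v (arename a) <-> aholds (v \o s) a.
Proof.
case: a => [t u|R args] /=; first by rewrite !teval_rename.
by rewrite (funext (fun i => teval_rename (args i))).
Qed.

Lemma Forall_aholds_rename Phi :
  List.Forall (aholds v) (List.map arename Phi) <-> List.Forall (aholds (v \o s)) Phi.
Proof.
by rewrite List.Forall_map; split; apply: List.Forall_impl => a /aholds_rename.
Qed.

End Renaming.

Lemma pholds_atomic_support (L : signature) (M : structure L) (V : Type) (v : V -> M)
    (theta : pqf L V) :
  pholds v theta ->
  exists Phi : list (atomic L V), List.Forall (aholds v) Phi /\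
    forall (N : structure L) (u : V -> N), List.Forall (aholds u) Phi -> pholds u theta.
Proof.
elim: theta => [a||| p IHp q IHq | p IHp q IHq] //=.
- by move=> Ha; exists [:: a]; split=> [|N u Hu]; [constructor | exact: List.Forall_inv Hu].
- by exists [::].
- move=> [/IHp [Phi [HPhi KPhi]] /IHq [Psi [HPsi KPsi]]].
  exists (Phi ++ Psi); split; first exact/List.Forall_app.
  by move=> N u /List.Forall_app [/KPhi ? /KPsi ?].
- case=> [/IHp|/IHq] [Phi [HPhi KPhi]]; exists Phi; split=> // N u /KPhi; auto.
Qed.

Lemma trivial_aholds (L : signature) (p : nat -> trivial_structure L) a : aholds p a.
Proof. by case: a => [t u|R args] //=; case: (teval p t); case: (teval p u). Qed.

Lemma embeds_trivialP (L : signature) (M : structure L) :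
  embeds (trivial_structure L) M <-> exists b : M, forall a, aholds (fun _ : nat => b) a.
Proof.
split=> [[e He]|[b Hb]].
  by exists (e tt) => a; apply/(He a (fun _ => tt))/trivial_aholds.
by exists (fun _ => b) => a p; split=> // _; exact: trivial_aholds.
Qed.

Section GeometricallyClosed.
Variables (L : signature) (A B : structure L) (f : A -> B).
Hypothesis f_geom_closed : geom_closed f.

Lemma geom_closed_refutation_trivial (p : nat -> A) (Phi : list (atomic L (nat + nat)))
    (yB : nat -> B) :
  (forall y : nat -> A, ~ List.Forall (aholds (join p y)) Phi) ->
  List.Forall (aholds (join (f \o p) yB)) Phi ->
  embeds (trivial_structure L) B.
Proof.
move=> Phi_refuted Phi_yB; apply/embeds_trivialP.
have [b] := nonempty B; exists b => a.
(* Shifting the variables of [Phi] frees [inr 0] to carry [b]. *)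
pose shift (x : nat + nat) := if x is inr j then inr j.+1 else x.
have Phi_a_A : geom_holds p (List.map (arename shift) Phi) (arename (fun=> inr 0) a).
  move=> y /Forall_aholds_rename Phi_y; exfalso; apply: (Phi_refuted (fun j => y j.+1)).
  by rewrite (_ : join _ _ = join p y \o shift) //; apply: funext => -[].
suff /aholds_rename Ha : aholds (join (f \o p) (fun j => if j is k.+1 then yB k else b))
                                (arename (fun=> inr 0) a) by exact: Ha.
apply: (f_geom_closed Phi_a_A); apply/Forall_aholds_rename.
by rewrite (_ : _ \o shift = join (f \o p) yB) //; apply: funext => -[].
Qed.

Lemma geom_closed_immersion : ~ embeds (trivial_structure L) B -> immersion f.
Proof.
move=> not_trivial theta p [yB /pholds_atomic_support [Phi [Phi_yB Phi_theta]]].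
apply: contrapT => no_witness; apply: not_trivial.
apply: (geom_closed_refutation_trivial _ Phi_yB) => y /Phi_theta Hy.
by apply: no_witness; exists y.
Qed.

End GeometricallyClosed.

Section Ultraproduct.
Variables (L : signature) (I : Type) (M : I -> structure L) (U : (I -> Prop) -> Prop).
Context {U_ultra : UltraFilter U}.

Lemma ultra_not (P : I -> Prop) : ~ U P <-> U (fun i => ~ P i).
Proof.
split=> [|UnP UP]; first by case: (in_ultra_setVsetC P U_ultra).
by apply: (filter_not_empty U); apply: filterS (filterI UP UnP) => i [].
Qed.

Lemma ultra_or (P Q : I -> Prop) : U (fun i => P i \/ Q i) -> U P \/ U Q.
Proof.
move=> UPQ; case: (in_ultra_setVsetC P U_ultra) => [|UnP]; first by left.
by right; apply: filterS (filterI UPQ UnP) => i [[]].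
Qed.

Lemma ultra_forall_fin (K : finType) (P : K -> I -> Prop) :
  (forall k, U (P k)) -> U (fun i => forall k, P k i).
Proof.
move=> UP; suff : U (fun i => forall k, k \in index_enum K -> P k i).
  by apply: filterS => i Pi k; apply/Pi/mem_index_enum.
elim: (index_enum K) => [|k s IHs]; first exact: filterS filterT.
apply: filterS (filterI (UP k) IHs) => i [Pki Psi] k'.
by rewrite in_cons => /predU1P [->|/Psi].
Qed.

Lemma ultra_choice (P : forall i, M i -> Prop) :
  exists g : forall i, M i, forall i, (exists b, P i b) -> P i (g i).
Proof.
have witness i : exists b : M i, (exists b', P i b') -> P i b.
  have [[b Pb]|nP] := EM (exists b, P i b); first by exists b.
  by have [b] := nonempty (M i); exists b.
by exists (fun i => sval (cid (witness i))) => i; exact: svalP (cid (witness i)).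
Qed.

Definition ueq (g h : forall i, M i) : Prop := U (fun i => g i = h i).

(* Elements of the ultraproduct are the classes of [ueq], represented as
   predicates, so that no quotient type is needed. *)
Definition ucarrier := {S : (forall i, M i) -> Prop | exists g, S = ueq g}.

Definition upi (g : forall i, M i) : ucarrier := exist _ (ueq g) (ex_intro _ g erefl).

Definition urepr (x : ucarrier) : forall i, M i := sval (cid (proj2_sig x)).

Lemma urepr_upi_eq x : upi (urepr x) = x.
Proof.
by case: x => S HS; apply: eq_exist; exact: (esym (proj2_sig (cid HS))).
Qed.

Lemma upi_eqP g h : upi g = upi h <-> ueq g h.
Proof.
split=> [E|Ugh].
  have : sval (upi h) h by apply: filterS filterT.
  by rewrite -E.
apply: eq_exist; apply: funext => k; apply: propext.
by split=> Uk; apply: filterS (filterI Ugh Uk) => i [-> ->].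
Qed.

Lemma urepr_upi g : ueq (urepr (upi g)) g.
Proof. by apply/upi_eqP; rewrite urepr_upi_eq. Qed.

Lemma ucarrier_inhabited : inhabited ucarrier.
Proof. by have [g _] := ultra_choice (fun _ _ => True); exact: inhabits (upi g). Qed.

Definition ultraproduct : structure L :=
  @Structure L ucarrier ucarrier_inhabited
    (fun F args => upi (fun i => @funI L (M i) F (fun k => urepr (args k) i)))
    (fun R args => U (fun i => @relI L (M i) R (fun k => urepr (args k) i))).

Definition represents (v : nat -> ultraproduct) (w : forall i, nat -> M i) :=
  forall n, v n = upi (fun i => w i n).

Lemma represents_urepr v : represents v (fun i n => urepr (v n) i).
Proof. by move=> n; rewrite urepr_upi_eq. Qed.

Lemma represents_upd v w n g :
  represents v w -> represents (upd v n (upi g)) (fun i => upd (w i) n (g i)).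
Proof. by move=> vw m; rewrite /upd; case: (m == n). Qed.

Lemma urepr_upi_fin (K : finType) (g : K -> forall i, M i) :
  U (fun i => (fun k => urepr (upi (g k)) i) = (fun k => g k i)).
Proof.
apply: filterS (ultra_forall_fin (fun k => urepr_upi (g k))) => i Hi.
exact: funext.
Qed.

Section Evaluation.
Variables (v : nat -> ultraproduct) (w : forall i, nat -> M i).
Hypothesis v_w : represents v w.

Lemma ultraproduct_teval t : teval v t = upi (fun i => teval (w i) t).
Proof.
elim: t => [x|F args IH] /=; first exact: v_w.
apply/upi_eqP; apply: filterS (urepr_upi_fin (fun k j => teval (w j) (args k))) => i E.
by congr funI; apply: funext => k; rewrite IH; exact: (congr1 (@^~ k) E).
Qed.

Lemma urepr_teval (K : finType) (ts : K -> term L nat) :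
  U (fun i => (fun k => urepr (teval v (ts k)) i) = (fun k => teval (w i) (ts k))).
Proof.
apply: filterS (urepr_upi_fin (fun k j => teval (w j) (ts k))) => i E.
by apply: funext => k; rewrite ultraproduct_teval; exact: (congr1 (@^~ k) E).
Qed.

Lemma ultraproduct_aholds a : aholds v a <-> U (fun i => aholds (w i) a).
Proof.
case: a => [t u|R args] /=; first by rewrite !ultraproduct_teval upi_eqP.
have reprs := urepr_teval args.
by split=> UR; apply: filterS (filterI reprs UR) => i [E]; rewrite E.
Qed.

End Evaluation.

Theorem ultraproduct_fholds phi v w :
  represents v w -> fholds v phi <-> U (fun i => fholds (w i) phi).
Proof.
elim: phi v w => [a||| p IH | p IHp q IHq | p IHp q IHq | p IHp q IHq | n p IH | n p IH]
  v w v_w /=.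
- exact: ultraproduct_aholds.
- by split=> // _; exact: filterT.
- by split=> //; exact: filter_not_empty.
- by rewrite (IH v w v_w); exact: ultra_not.
- rewrite (IHp v w v_w) (IHq v w v_w).
  by split=> [[UP UQ]|UPQ]; [exact: filterI | split; apply: filterS UPQ => i []].
- rewrite (IHp v w v_w) (IHq v w v_w).
  split=> [[UP|UQ]|/ultra_or[UP|UQ]]; [| | by left | by right].
    by apply: filterS UP => i; left.
  by apply: filterS UQ => i; right.
- rewrite (IHp v w v_w) (IHq v w v_w).
  split=> [UPQ|UPQ UP]; last by apply: filterS (filterI UPQ UP) => i [].
  have [/UPQ UQ|UnP] := in_ultra_setVsetC (fun i => fholds (w i) p) U_ultra.
    by apply: filterS UQ.
  by apply: filterS UnP => i.
- split=> [Hall|UP a].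
    have [g Hg] := ultra_choice (fun i b => ~ fholds (upd (w i) n b) p).
    move: (Hall (upi g)); rewrite (IH _ _ (represents_upd n g v_w)).
    apply: filterS => i Hi b; apply: contrapT => Hb.
    exact: Hg i (ex_intro _ b Hb) Hi.
  rewrite -(urepr_upi_eq a) (IH _ _ (represents_upd n (urepr a) v_w)).
  by apply: filterS UP => i; apply.
- split=> [[a]|UP].
    rewrite -(urepr_upi_eq a) (IH _ _ (represents_upd n (urepr a) v_w)).
    by apply: filterS => i Hi; exists (urepr a i).
  have [g Hg] := ultra_choice (fun i b => fholds (upd (w i) n b) p).
  exists (upi g); rewrite (IH _ _ (represents_upd n g v_w)).
  by apply: filterS UP => i; exact: Hg i.
Qed.

End Ultraproduct.

Lemma ultrafilter_containing_members (X : Type) :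
  exists U : (list X -> Prop) -> Prop, UltraFilter U /\ forall x, U (fun l => List.In x l).
Proof.
pose F (S : list X -> Prop) := exists l, forall l', List.incl l l' -> S l'.
have F_proper : ProperFilter F.
  apply: Build_ProperFilter_ex => [S [l Sl]|]; first by exists l; apply/Sl/List.incl_refl.
  split; first by exists [::].
    move=> S S' [l Sl] [l' Sl']; exists (l ++ l') => m /List.incl_app_inv [lm l'm].
    by split; [exact: Sl | exact: Sl'].
  by move=> S S' SS' [l Sl]; exists l => m /Sl /SS'.
have [U [U_ultra FU]] := ultraFilterLemma F_proper.
by exists U; split=> // x; apply: FU; exists [:: x] => l; apply; left.
Qed.

Lemma models_Tu_const_sat (L : signature) (T : theory L) (B : structure L) (b : B)
    (Phi : list (atomic L nat)) :
  models_Tu T B -> List.Forall (aholds (fun=> b)) Phi ->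
  exists N : {M : structure L & M},
    models T (projT1 N) /\ List.Forall (aholds (fun=> projT2 N)) Phi.
Proof.
move=> B_Tu Phi_b; apply: contrapT => no_model.
apply: (B_Tu (List.map (arename (fun=> 0)) Phi) _ (fun=> b)); last first.
  exact/Forall_aholds_rename.
move=> N N_T y /Forall_aholds_rename Phi_y; apply: no_model.
by exists (existT _ N (y 0)).
Qed.

Lemma strict_not_embeds_trivial (L : signature) (T : theory L) (B : structure L) :
  strict T -> models_Tu T B -> ~ embeds (trivial_structure L) B.
Proof.
move=> T_strict B_Tu /embeds_trivialP [b b_trivial].
have sat (Phi : list (atomic L nat)) := models_Tu_const_sat (Phi := Phi) B_Tu
  (proj2 (List.Forall_forall _ _) (fun a _ => b_trivial a)).
have [N N_sat] := choice sat.
have [U [U_ultra U_members]] := ultrafilter_containing_members (atomic L nat).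
pose c Phi : projT1 (N Phi) := projT2 (N Phi).
apply: (T_strict (ultraproduct (fun Phi => projT1 (N Phi)) U)).
  move=> phi T_phi v; apply/(ultraproduct_fholds _ (represents_urepr v)).
  by apply: filterS filterT => Phi _; exact: (N_sat Phi).1.
apply/embeds_trivialP; exists (upi U c) => a.
apply/(@ultraproduct_aholds _ _ _ _ _ (fun=> upi U c) (fun Phi _ => c Phi)) => //.
apply: filterS (U_members a) => Phi a_Phi.
exact: (proj1 (List.Forall_forall _ _) (N_sat Phi).2 a a_Phi).
Qed.

Theorem lemma4p9 (L : signature) :
  (forall (A B : structure L) (f : A -> B),
      homomorphism f -> geom_closed f -> ~ embeds (trivial_structure L) B -> immersion f)
  /\
  (forall T : theory L, strict T ->
   forall (A B : structure L) (f : A -> B),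
      models_Tu T A -> models_Tu T B ->
      homomorphism f -> geom_closed f -> immersion f).
Proof.
split=> [A B f _ f_gc|T T_strict A B f _ B_Tu _ f_gc]; apply: (geom_closed_immersion f_gc).
exact: strict_not_embeds_trivial T_strict B_Tu.
Qed.
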